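(* Let $1\le s<n$ and $0<m<\binom{n}{s}$, and let $m=\sum_{k=0}^{\ell-1}\binom{n_{s-k}}{s-k}$ be the $s$-cascade representation of $m$. Then the $(n-s)$-cascade representation of $m'=\binom{n}{s}-m$ is $m'=\sum_{j=0}^{k-1}\binom{n'_{n-s-j}}{n-s-j}$ where $n_{s-\ell+1}=n'_{n-s-k+1}$ and, writing $b$ for this common value, \[\{b,n_{s-\ell+2},\dots,n_s\}\cup\{b,n'_{n-s-k+2},\dots,n'_{n-s}\}=\{b,b+1,\dots,n-1\},\] \[\{b,n_{s-\ell+2},\dots,n_s\}\cap\{b,n'_{n-s-k+2},\dots,n'_{n-s}\}=\{b\}.\] In particular $k+\ell-1=n-b$, i.e. $k=n-\ell-b+1$.
   Context: A strict $q$-cascade is an integer sequence $n_q>n_{q-1}>\dots>n_{q-\ell+1}$ with $0\le\ell\le q$ and $n_{q-j}\ge q-j$ for all $j$. Every integer $m\ge 0$ can be written uniquely as $m=\sum_{j=0}^{\ell-1}\binom{n_{q-j}}{q-j}$ with a strict $q$-cascade; this is the $q$-cascade representation of $m$, of length $\ell$. *)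

From mathcomp Require Import all_boot.
Set Implicit Arguments. Unset Strict Implicit. Unset Printing Implicit Defensive.

(* A q-cascade n_q > n_{q-1} > ... > n_{q-l+1} is represented by the list
   c = [:: n_q; n_{q-1}; ...; n_{q-l+1}], so that nth 0 c j = n_{q-j}. *)
Definition strict_cascade (q : nat) (c : seq nat) : bool :=
  [&& size c <= q,
      sorted (fun a b => b < a) c &
      all (fun j => q - j <= nth 0 c j) (iota 0 (size c))].

Definition cascade_val (q : nat) (c : seq nat) : nat :=
  \sum_(j < size c) 'C(nth 0 c j, q - j).

(* Since
   'C(N, s) = 'C(N-1, s) + 'C(N-1, t) for s + t = N, and a cascade headed by
   a is worth less than 'C(a+1, q), one of the two cascades must start with
   N - 1.  Removing that term leaves an (s-1)-cascade and a t-cascade whose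
   values add up to 'C(N-1, t), so induction on N applies; the removed N - 1
   enlarges the union of the two cascades to [b, N) without touching their
   intersection {b}.  The induction bottoms out at the pair [:: N-1], [:: N-1].
*)

From mathcomp Require Import all_boot.
From mathcomp Require Import zify.
Set Implicit Arguments. Unset Strict Implicit.

Lemma bin_compl N s t : s + t = N -> 'C(N, s) = 'C(N, t).
Proof. by move=> <-; rewrite -bin_sub ?leq_addr // addKn. Qed.

Lemma cascade_val_nil q : cascade_val q [::] = 0.
Proof. by rewrite /cascade_val big_ord0. Qed.

Lemma cascade_val_cons q a d :
  cascade_val q (a :: d) = 'C(a, q) + cascade_val q.-1 d.
Proof.
rewrite /cascade_val big_ord_recl subn0; congr (_ + _).
by apply: eq_bigr => i _ /=; rewrite /bump leq0n add1n subnS -subn1 subnAC subn1.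
Qed.

Lemma strict_cascade_cons q a d : strict_cascade q (a :: d) ->
  [/\ 0 < q, q <= a & strict_cascade q.-1 d].
Proof.
rewrite /strict_cascade /= subn0.
move=> /and3P [size_le sorted_ad /andP [q_le_a all_d]].
split=> //; first lia.
apply/and3P; split; first lia.
- exact: path_sorted sorted_ad.
- move: all_d; rewrite -[1]/(1 + 0) iotaDl all_map.
  by apply: sub_all => j /=; rewrite add1n; have -> : q - j.+1 = q.-1 - j by lia.
Qed.

Lemma strict_cascade_head_lt q a x d : strict_cascade q [:: a, x & d] -> x < a.
Proof. by case/and3P => _ /= /andP []. Qed.

Lemma cascade_val_gt0 q a d :
  strict_cascade q (a :: d) -> 0 < cascade_val q (a :: d).
Proof.
case/strict_cascade_cons => _ q_le_a _; rewrite cascade_val_cons.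
by rewrite ltn_addr // bin_gt0.
Qed.

Lemma cascade_val_eq0 q c :
  strict_cascade q c -> cascade_val q c = 0 -> c = [::].
Proof. by case: c => // a d /cascade_val_gt0; lia. Qed.

Lemma cascade_val_lt_binS q a d :
  strict_cascade q (a :: d) -> cascade_val q (a :: d) < 'C(a.+1, q).
Proof.
elim: d q a => [|x d IH] q a c_cascade;
  have [q_gt0 q_le_a d_cascade] := strict_cascade_cons c_cascade.
  rewrite cascade_val_cons cascade_val_nil.
  by case: q q_gt0 q_le_a {c_cascade d_cascade} => // q _ q_le_a;
    rewrite binS ltn_add2l bin_gt0; lia.
case: q q_gt0 {q_le_a} c_cascade d_cascade => // q _ c_cascade d_cascade.
rewrite cascade_val_cons binS ltn_add2l.
apply: leq_trans (IH _ _ d_cascade) _.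
by apply: leq_bin2l; apply: strict_cascade_head_lt c_cascade.
Qed.

Lemma cascade_head_lt N q a d : cascade_val q (a :: d) < 'C(N, q) -> a < N.
Proof.
move=> val_lt; rewrite ltnNge; apply/negP => N_le_a.
by move: (leq_bin2l q N_le_a) val_lt; rewrite cascade_val_cons; lia.
Qed.

Lemma cascade_of_bin q N c : 0 < q -> q <= N ->
  strict_cascade q c -> cascade_val q c = 'C(N, q) -> c = [:: N].
Proof.
move=> q_gt0 q_le_N; have binN_gt0 : 0 < 'C(N, q) by rewrite bin_gt0.
case: c => [|a d] c_cascade val_eq.
  by move: val_eq; rewrite cascade_val_nil; lia.
have a_lt_N1 : a < N.+1.
  apply: (@cascade_head_lt _ q _ d); rewrite val_eq.
  by case: q q_gt0 q_le_N {c_cascade val_eq binN_gt0} => // q _ q_le_N;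
    rewrite binS -[X in X < _]addn0 ltn_add2l bin_gt0; lia.
have N_le_a : N <= a.
  rewrite leqNgt; apply/negP => a_lt_N.
  move: (cascade_val_lt_binS c_cascade) (leq_bin2l q a_lt_N).
  by rewrite val_eq; lia.
have a_eq_N : a = N by lia.
have [_ _ d_cascade] := strict_cascade_cons c_cascade.
rewrite a_eq_N (@cascade_val_eq0 q.-1 d) //.
by move: val_eq; rewrite cascade_val_cons a_eq_N; lia.
Qed.

Definition complementary_cascades N (c c' : seq nat) :=
  [/\ last 0 c' = last 0 c,
      (forall x, (x \in c) || (x \in c') = (last 0 c <= x < N)),
      (forall x, (x \in c) && (x \in c') = (x == last 0 c)) &
      size c' + size c - 1 = N - last 0 c].

Lemma complementary_cascadesC N c c' :
  complementary_cascades N c' c -> complementary_cascades N c c'.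
Proof.
case=> last_eq union_eq inter_eq size_eq.
split=> [|x|x|]; rewrite last_eq //.
- by rewrite orbC union_eq.
- by rewrite andbC inter_eq.
- by rewrite addnC size_eq.
Qed.

Lemma complementary_cascades_base n : complementary_cascades n.+1 [:: n] [:: n].
Proof.
split=> //= [x|x|]; rewrite ?inE ?orbb ?andbb //; last lia.
by rewrite ltnS andbC -eqn_leq.
Qed.

Lemma complementary_cascades_cons n y d c' :
  complementary_cascades n (y :: d) c' ->
  complementary_cascades n.+1 [:: n, y & d] c'.
Proof.
case=> /=; set b := last y d => last_eq union_eq inter_eq size_eq.
have b_lt_n : b < n by have := union_eq b; rewrite mem_last /=; lia.
have n_notin_c' : n \notin c' by have := union_eq n; rewrite ltnn andbF => /norP [].
split=> // [x|x|].
- rewrite inE -orbA union_eq.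
  by case: (ltngtP x n) => [x_lt_n|n_lt_x|->]; rewrite ?ltnS /=; lia.
- rewrite inE andb_orl inter_eq.
  by case: eqP => [->|]; rewrite ?(negbTE n_notin_c') /= ?andbF //; lia.
- by move: size_eq b_lt_n => /=; rewrite -/b; lia.
Qed.

Definition cascade_duality N := forall s t c c',
  0 < s -> 0 < t -> s + t = N ->
  strict_cascade s c -> strict_cascade t c' ->
  0 < cascade_val s c -> 0 < cascade_val t c' ->
  cascade_val s c + cascade_val t c' = 'C(N, s) ->
  complementary_cascades N c c'.

Lemma cascade_heads_top n s t a d a' e :
  0 < s -> s + t = n.+1 ->
  strict_cascade s (a :: d) -> strict_cascade t (a' :: e) ->
  cascade_val s (a :: d) + cascade_val t (a' :: e) = 'C(n.+1, s) ->
  a = n \/ a' = n.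
Proof.
move=> s_gt0 st_eq c_cascade c'_cascade val_sum.
have [a_lt a'_lt] : a < n.+1 /\ a' < n.+1.
  split; [apply: (@cascade_head_lt _ s _ d) | apply: (@cascade_head_lt _ t _ e)].
    by move: (cascade_val_gt0 c'_cascade); lia.
  by rewrite -(bin_compl st_eq); move: (cascade_val_gt0 c_cascade); lia.
case: (ltngtP a n) => [a_lt_n||]; [|lia|by left].
case: (ltngtP a' n) => [a'_lt_n||]; [|lia|by right].
move: (cascade_val_lt_binS c_cascade) (leq_bin2l s a_lt_n).
move: (cascade_val_lt_binS c'_cascade) (leq_bin2l t a'_lt_n).
case: s s_gt0 st_eq c_cascade val_sum => // s _ st_eq _.
by rewrite binS (bin_compl (_ : s + t = n)); lia.
Qed.

Section DualityStep.

Variable n : nat.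
Hypothesis duality_n : cascade_duality n.

Lemma complementary_cascades_top s t d c' :
  0 < s -> 0 < t -> s + t = n.+1 ->
  strict_cascade s (n :: d) -> strict_cascade t c' -> 0 < cascade_val t c' ->
  cascade_val s (n :: d) + cascade_val t c' = 'C(n.+1, s) ->
  complementary_cascades n.+1 (n :: d) c'.
Proof.
case: s => // s _ t_gt0 st_eq c_cascade c'_cascade c'_val_gt0.
have [_ _ d_cascade] := strict_cascade_cons c_cascade.
rewrite cascade_val_cons binS (bin_compl (_ : s + t = n)); last lia.
move=> /eqP; rewrite -addnA eqn_add2l => /eqP val_sum.
case: d c_cascade d_cascade val_sum => [|y d] c_cascade d_cascade val_sum.
  have t_le_n : t <= n by lia.
  move: val_sum; rewrite cascade_val_nil add0n.
  move=> /(cascade_of_bin t_gt0 t_le_n c'_cascade) ->.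
  exact: complementary_cascades_base.
have [s_gt0 _ _] := strict_cascade_cons d_cascade.
apply: complementary_cascades_cons; apply: (duality_n (s := s) (t := t)) => //.
- lia.
- exact: cascade_val_gt0.
- by rewrite (bin_compl (_ : s + t = n)) //; lia.
Qed.

Lemma cascade_dualityS : cascade_duality n.+1.
Proof.
move=> s t [|a d] [|a' e] s_gt0 t_gt0 st_eq c_cascade c'_cascade;
  rewrite ?cascade_val_nil //.
move=> c_val_gt0 c'_val_gt0 val_sum.
have [a_eq_n|a'_eq_n] :=
  cascade_heads_top s_gt0 st_eq c_cascade c'_cascade val_sum.
  by subst a; apply: (complementary_cascades_top s_gt0 t_gt0 st_eq).
subst a'; apply/complementary_cascadesC.
apply: (complementary_cascades_top t_gt0 s_gt0) => //.
  by rewrite addnC.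
by rewrite addnC -(bin_compl st_eq).
Qed.

End DualityStep.

Lemma cascade_dualityP N : cascade_duality N.
Proof. by elim: N => [|n /cascade_dualityS //] s t c c' s_gt0 t_gt0; lia. Qed.

Theorem mainTheorem9 (n s m : nat) (c c' : seq nat) :
  1 <= s -> s < n -> 0 < m -> m < 'C(n, s) ->
  strict_cascade s c -> cascade_val s c = m ->
  strict_cascade (n - s) c' -> cascade_val (n - s) c' = 'C(n, s) - m ->
  let b := last 0 c in
  [/\ last 0 c' = b,
      (forall x, (x \in c) || (x \in c') = (b <= x < n)),
      (forall x, (x \in c) && (x \in c') = (x == b)) &
      size c' + size c - 1 = n - b].
Proof.
move=> s_gt0 s_lt_n m_gt0 m_lt c_cascade c_val c'_cascade c'_val b.
apply: (cascade_dualityP (s := s) (t := n - s) _ _ _ c_cascade c'_cascade);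
  rewrite ?c_val ?c'_val; lia.
Qed.
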